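(* Let $\Sigma$ be a signature, $T$ a monad on sets carrying a continuous $\Sigma$-algebra structure, and $\Gamma$ a relator for the monad $T$ that is inductive and respects $\Sigma$. Then the closed part of the Howe extension $\precsim^H$ of applicative $\Gamma$-similarity, namely $(\{(M,N)\mid\emptyset\vdash M\precsim^H_{\mathcal{T}}N\},\{(V,W)\mid\emptyset\vdash V\precsim^H_{\mathcal{V}}W\})$, is an applicative $\Gamma$-simulation.
   Context: An $\omega$CPPO is a poset with least element $\bot$ in which every $\omega$-chain has a lub; continuous = monotone and preserving such lubs. $T$ (unit $\eta$, bind $u\texttt{>>=}f$) carries a continuous $\Sigma$-algebra structure if each $TX$ is an $\omega$CPPO, bind is continuous in both arguments, and each $\sigma\in\Sigma$ of arity $k$ is interpreted by a continuous $\sigma^T:(TX)^k\to TX$. A relator $\Gamma$ for $T$ assigns to each $R\subseteq X\times Y$ a relation $\Gamma R\subseteq TX\times TY$ with: $=_{TX}\subseteq\Gamma(=_X)$; $\Gamma S\circ\Gamma R\subseteq\Gamma(S\circ R)$; $\Gamma((f\times g)^{-1}R)=(Tf\times Tg)^{-1}\Gamma R$ where $(f\times g)^{-1}R=\{(z,w)\mid f(z)\,R\,g(w)\}$; monotone in $R$; $x\,R\,y\Rightarrow\eta(x)\,\Gamma R\,\eta(y)$; and if $x\,R\,y\Rightarrow f(x)\,\Gamma S\,g(y)$ for all $x,y$ then $u\,\Gamma R\,v\Rightarrow(u\texttt{>>=}f)\,\Gamma S\,(v\texttt{>>=}g)$. Inductive: for every $R$, $\bot\,\Gamma R\,v$ for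 all $v$, and for every $\omega$-chain $(u_n)$, $(\forall n.\ u_n\,\Gamma R\,v)\Rightarrow\bigsqcup_n u_n\,\Gamma R\,v$. Respects $\Sigma$: $u_i\,\Gamma R\,v_i$ for all $i$ implies $\sigma^T(\vec u)\,\Gamma R\,\sigma^T(\vec v)$. Terms/values: $M,N::=\mathsf{return}\,V\mid VW\mid(M\ \mathsf{to}\ x.N)\mid\sigma(M_1,\dots,M_{\alpha(\sigma)})$, $V,W::=x\mid\lambda x.M$, modulo $\alpha$-equivalence; $M[V/x]$ substitution; $\mathcal{T}_0,\mathcal{V}_0$ closed terms/values; $\mathcal{T}(\bar x),\mathcal{V}(\bar x)$ those with free variables in $\bar x$. For closed $M$: $M^{(0)}=\bot$, $(\mathsf{return}\,V)^{(n+1)}=\eta(V)$, $((\lambda x.M)V)^{(n+1)}=(M[V/x])^{(n)}$, $(M\ \mathsf{to}\ x.N)^{(n+1)}=M^{(n)}\texttt{>>=}(V\mapsto(N[V/x])^{(n)})$, $(\sigma(\vec M))^{(n+1)}=\sigma^T(M_1^{(n)},\dots)$; this is an $\omega$-chain and $[\![M]\!]=\bigsqcup_nM^{(n)}$. A closed relation $R=(R_{\mathcal{T}}\subseteq\mathcal{T}_0\times\mathcal{T}_0,R_{\mathcal{V}}\subseteq\mathcal{V}_0\times\mathcal{V}_0)$ is an applicative $\Gamma$-simulation if $M\,R_{\mathcal{T}}\,N\Rightarrow[\![M]\!]\,\Gamma R_{\mathcal{V}}\,[\![N]\!]$ and $V\,R_{\mathcal{V}}\,W\Rightarrow VU\,R_{\mathcal{T}}\,WU$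 for every closed value $U$. Applicative $\Gamma$-similarity $\precsim$ is the largest one. Its open extension $\precsim^\circ$: $\bar x\vdash M\precsim^\circ_{\mathcal{T}}N$ iff $M,N\in\mathcal{T}(\bar x)$ and $M[\bar V/\bar x]\precsim_{\mathcal{T}}N[\bar V/\bar x]$ for all closed values $\bar V$ (similarly for values). The Howe extension $\precsim^H$ is the least pair of sets of triples closed under: (H1) if $x\in\bar x$ and $\bar x\vdash x\precsim^\circ_{\mathcal{V}}V$ then $\bar x\vdash x\precsim^H_{\mathcal{V}}V$; (H2) if $x\notin\bar x$, $\bar x\cup\{x\}\vdash M\precsim^H_{\mathcal{T}}L$ and $\bar x\vdash\lambda x.L\precsim^\circ_{\mathcal{V}}V$ then $\bar x\vdash\lambda x.M\precsim^H_{\mathcal{V}}V$; (H3) if $\bar x\vdash V\precsim^H_{\mathcal{V}}W$ and $\bar x\vdash\mathsf{return}\,W\precsim^\circ_{\mathcal{T}}N$ then $\bar x\vdash\mathsf{return}\,V\precsim^H_{\mathcal{T}}N$; (H4) if $\bar x\vdash V\precsim^H_{\mathcal{V}}V'$, $\bar x\vdash W\precsim^H_{\mathcal{V}}W'$, $\bar x\vdash V'W'\precsim^\circ_{\mathcal{T}}N$ then $\bar x\vdash VW\precsim^H_{\mathcal{T}}N$; (H5) if $\bar x\vdash M\precsim^H_{\mathcal{T}}L$, $\bar x\cup\{x\}\vdash M'\precsim^H_{\mathcal{T}}L'$, $\bar x\vdash(L\ \mathsf{to}\ x.L')\precsim^\circ_{\mathcal{T}}N$ then $\bar x\vdash(M\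 \mathsf{to}\ x.M')\precsim^H_{\mathcal{T}}N$; (H6) if $\bar x\vdash M_k\precsim^H_{\mathcal{T}}N_k$ for all $k\le n$ and $\bar x\vdash\sigma(N_1,\dots,N_n)\precsim^\circ_{\mathcal{T}}N$ then $\bar x\vdash\sigma(M_1,\dots,M_n)\precsim^H_{\mathcal{T}}N$. *)

From mathcomp Require Import all_boot.
Set Implicit Arguments. Unset Strict Implicit. Unset Printing Implicit Defensive.

Record signature := Signature { sop :> Type; sar : sop -> nat }.

(* Terms and values, well-scoped de Bruijn (= modulo alpha-equivalence)*)
Section Terms.
Variable Sg : signature.

Inductive val (n : nat) : Type :=
| Var : 'I_n -> val n
| Lam : comp n.+1 -> val n
with comp (n : nat) : Type :=
| Ret : val n -> comp n
| App : val n -> val n -> comp n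
| Seq : comp n -> comp n.+1 -> comp n            (* M to x. N *)
| Op  : forall s : Sg, ('I_(sar s) -> comp n) -> comp n.
Arguments Op {n} s _.

Definition up_ren n m (r : 'I_n -> 'I_m) : 'I_n.+1 -> 'I_m.+1 :=
  fun i => match unlift ord0 i with Some j => lift ord0 (r j) | None => ord0 end.

Fixpoint ren_val n m (r : 'I_n -> 'I_m) (v : val n) {struct v} : val m :=
  match v with
  | Var i => Var (r i)
  | Lam M => Lam (ren_comp (up_ren r) M)
  end
with ren_comp n m (r : 'I_n -> 'I_m) (M : comp n) {struct M} : comp m :=
  match M with
  | Ret V => Ret (ren_val r V)
  | App V W => App (ren_val r V) (ren_val r W)
  | Seq M1 M2 => Seq (ren_comp r M1) (ren_comp (up_ren r) M2)
  | Op s Ms => Op s (fun i => ren_comp r (Ms i))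
  end.

Definition up_sub n m (s : 'I_n -> val m) : 'I_n.+1 -> val m.+1 :=
  fun i => match unlift ord0 i with
           | Some j => ren_val (lift ord0) (s j)
           | None => Var ord0
           end.

Fixpoint sub_val n m (s : 'I_n -> val m) (v : val n) {struct v} : val m :=
  match v with
  | Var i => s i
  | Lam M => Lam (sub_comp (up_sub s) M)
  end
with sub_comp n m (s : 'I_n -> val m) (M : comp n) {struct M} : comp m :=
  match M with
  | Ret V => Ret (sub_val s V)
  | App V W => App (sub_val s V) (sub_val s W)
  | Seq M1 M2 => Seq (sub_comp s M1) (sub_comp (up_sub s) M2)
  | Op s' Ms => Op s' (fun i => sub_comp s (Ms i))
  end.

Definition subst1 (M : comp 1) (V : val 0) : comp 0 := sub_comp (fun _ => V) M.

End Terms.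
Arguments Var {Sg n} _.
Arguments Lam {Sg n} _.
Arguments Ret {Sg n} _.
Arguments App {Sg n} _ _.
Arguments Seq {Sg n} _ _.
Arguments Op {Sg n} s _.

Record cmonad (Sg : signature) := CMonad {
  mT : Type -> Type;
  ret : forall X, X -> mT X;
  bind : forall X Y, mT X -> (X -> mT Y) -> mT Y;
  bind_ret_l : forall X Y (x : X) (f : X -> mT Y), @bind X Y (@ret X x) f = f x;
  bind_ret_r : forall X (u : mT X), @bind X X u (@ret X) = u;
  bind_assoc : forall X Y Z (u : mT X) (f : X -> mT Y) (g : Y -> mT Z),
      @bind Y Z (@bind X Y u f) g = @bind X Z u (fun x => @bind Y Z (f x) g);
  le : forall X, mT X -> mT X -> Prop;
  le_refl : forall X (u : mT X), @le X u u;
  le_trans : forall X (u v w : mT X), @le X u v -> @le X v w -> @le X u w;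
  le_antisym : forall X (u v : mT X), @le X u v -> @le X v u -> u = v;
  bot : forall X, mT X;
  bot_least : forall X (u : mT X), @le X (@bot X) u;
  lub : forall X, (nat -> mT X) -> mT X;
  lub_ub : forall X (u : nat -> mT X), (forall n, @le X (u n) (u n.+1)) ->
      forall n, @le X (u n) (@lub X u);
  lub_least : forall X (u : nat -> mT X) (v : mT X), (forall n, @le X (u n) (u n.+1)) ->
      (forall n, @le X (u n) v) -> @le X (@lub X u) v;
  bind_mono_l : forall X Y (u u' : mT X) (f : X -> mT Y),
      @le X u u' -> @le Y (@bind X Y u f) (@bind X Y u' f);
  bind_mono_r : forall X Y (u : mT X) (f g : X -> mT Y),
      (forall x, @le Y (f x) (g x)) -> @le Y (@bind X Y u f) (@bind X Y u g);
  bind_cont_l : forall X Y (u : nat -> mT X) (f : X -> mT Y),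
      (forall n, @le X (u n) (u n.+1)) ->
      @bind X Y (@lub X u) f = @lub Y (fun n => @bind X Y (u n) f);
  bind_cont_r : forall X Y (u : mT X) (fs : nat -> X -> mT Y),
      (forall n x, @le Y (fs n x) (fs n.+1 x)) ->
      @bind X Y u (fun x => @lub Y (fun n => fs n x)) = @lub Y (fun n => @bind X Y u (fs n));
  opT : forall X (s : Sg), ('I_(sar s) -> mT X) -> mT X;
  opT_mono : forall X (s : Sg) (us vs : 'I_(sar s) -> mT X),
      (forall i, @le X (us i) (vs i)) -> @le X (@opT X s us) (@opT X s vs);
  opT_cont : forall X (s : Sg) (us : nat -> 'I_(sar s) -> mT X),
      (forall n i, @le X (us n i) (us n.+1 i)) ->
      @opT X s (fun i => @lub X (fun n => us n i)) = @lub X (fun n => @opT X s (us n))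
}.

Arguments mT {Sg} c X.
Arguments ret {Sg} c {X}.
Arguments bind {Sg} c {X Y}.
Arguments le {Sg} c {X}.
Arguments bot {Sg} c {X}.
Arguments lub {Sg} c {X}.
Arguments opT {Sg} c {X} s.

Definition Tmap Sg (M : cmonad Sg) X Y (f : X -> Y) (u : mT M X) : mT M Y :=
  bind M u (fun x => ret M (f x)).
Arguments Tmap {Sg} M {X Y} f u.

Definition chain Sg (M : cmonad Sg) X (u : nat -> mT M X) : Prop :=
  forall n, le M (u n) (u n.+1).
Arguments chain {Sg} M {X} u.

Record relator Sg (M : cmonad Sg) := Relator {
  Gam : forall X Y, (X -> Y -> Prop) -> mT M X -> mT M Y -> Prop;
  rel_eq : forall X (u : mT M X), Gam (@eq X) u u;
  rel_comp : forall X Y Z (R : X -> Y -> Prop) (S : Y -> Z -> Prop) u v w,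
      Gam R u v -> Gam S v w -> Gam (fun x z => exists y, R x y /\ S y z) u w;
  rel_inv : forall X Y X' Y' (f : X' -> X) (g : Y' -> Y) (R : X -> Y -> Prop) u v,
      Gam (fun z w => R (f z) (g w)) u v <-> Gam R (Tmap M f u) (Tmap M g v);
  rel_mono : forall X Y (R S : X -> Y -> Prop) u v,
      (forall x y, R x y -> S x y) -> Gam R u v -> Gam S u v;
  rel_ret : forall X Y (R : X -> Y -> Prop) x y, R x y -> Gam R (ret M x) (ret M y);
  rel_bind : forall X Y X' Y' (R : X -> Y -> Prop) (S : X' -> Y' -> Prop)
      (f : X -> mT M X') (g : Y -> mT M Y') u v,
      (forall x y, R x y -> Gam S (f x) (g y)) -> Gam R u v ->
      Gam S (bind M u f) (bind M v g)
}.
Arguments Gam {Sg M} r {X Y} R u v.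

Definition rel_inductive Sg (M : cmonad Sg) (G : relator M) : Prop :=
  (forall X Y (R : X -> Y -> Prop) (v : mT M Y), Gam G R (bot M) v) /\
  (forall X Y (R : X -> Y -> Prop) (u : nat -> mT M X) (v : mT M Y),
      chain M u -> (forall n, Gam G R (u n) v) -> Gam G R (lub M u) v).

Definition rel_respects_sig Sg (M : cmonad Sg) (G : relator M) : Prop :=
  forall X Y (R : X -> Y -> Prop) (s : Sg) (us : 'I_(sar s) -> mT M X)
    (vs : 'I_(sar s) -> mT M Y),
    (forall i, Gam G R (us i) (vs i)) -> Gam G R (opT M s us) (opT M s vs).

Section Semantics.
Variables (Sg : signature) (M : cmonad Sg).

Fixpoint approx (k : nat) (P : comp Sg 0) {struct k} : mT M (val Sg 0) :=
  match k with
  | 0 => bot M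
  | k'.+1 =>
    match P with
    | Ret V => ret M V
    | App V W => match V with
                 | Lam B => approx k' (subst1 B W)
                 | Var _ => bot M   (* unreachable: no closed variables *)
                 end
    | Seq P1 P2 => bind M (approx k' P1) (fun V => approx k' (subst1 P2 V))
    | Op s Ps => opT M s (fun i => approx k' (Ps i))
    end
  end.

Definition den (P : comp Sg 0) : mT M (val Sg 0) := lub M (fun k => approx k P).

Variable G : relator M.

Definition app_sim (RT : comp Sg 0 -> comp Sg 0 -> Prop)
                   (RV : val Sg 0 -> val Sg 0 -> Prop) : Prop :=
  (forall P Q, RT P Q -> Gam G RV (den P) (den Q)) /\
  (forall V W, RV V W -> forall U, RT (App V U) (App W U)).

Definition simT (P Q : comp Sg 0) : Prop :=
  exists RT RV, app_sim RT RV /\ RT P Q.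
Definition simV (V W : val Sg 0) : Prop :=
  exists RT RV, app_sim RT RV /\ RV V W.

Definition openT n (P Q : comp Sg n) : Prop :=
  forall Vs : 'I_n -> val Sg 0, simT (sub_comp Vs P) (sub_comp Vs Q).
Definition openV n (V W : val Sg n) : Prop :=
  forall Vs : 'I_n -> val Sg 0, simV (sub_val Vs V) (sub_val Vs W).

Inductive howeV : forall n, val Sg n -> val Sg n -> Prop :=
| H1 : forall n (x : 'I_n) (V : val Sg n), openV (Var x) V -> howeV (Var x) V
| H2 : forall n (B L : comp Sg n.+1) (V : val Sg n),
    howeT B L -> openV (Lam L) V -> howeV (Lam B) V
with howeT : forall n, comp Sg n -> comp Sg n -> Prop :=
| H3 : forall n (V W : val Sg n) (N : comp Sg n),
    howeV V W -> openT (Ret W) N -> howeT (Ret V) N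
| H4 : forall n (V V' W W' : val Sg n) (N : comp Sg n),
    howeV V V' -> howeV W W' -> openT (App V' W') N -> howeT (App V W) N
| H5 : forall n (P L : comp Sg n) (P' L' : comp Sg n.+1) (N : comp Sg n),
    howeT P L -> howeT P' L' -> openT (Seq L L') N -> howeT (Seq P P') N
| H6 : forall n (s : Sg) (Ps Ns : 'I_(sar s) -> comp Sg n) (N : comp Sg n),
    (forall i, howeT (Ps i) (Ns i)) -> openT (Op s Ns) N -> howeT (Op s Ps) N.

End Semantics.

From mathcomp Require Import all_boot.
From Stdlib Require Import FunctionalExtensionality.

Set Implicit Arguments.
Unset Strict Implicit.
Unset Printing Implicit Defensive.

(** Howe's method. The Howe extension of similarity is compatible with every
    term former by construction, contains open similarity, is closed under
    substitution of related values, and absorbs similarity on the right.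
    These facts let one prove, by induction on [k], that the [k]-th
    approximant of [M] is [Γ]-related by the (closed) Howe relation to the
    denotation of [N] whenever [M ≾^H N]; inductivity of [Γ] then carries the
    relation to the lub ⟦M⟧.  The application clause of a simulation is
    immediate from rule (H4). *)

Scheme val_ind' := Induction for val Sort Prop
  with comp_ind' := Induction for comp Sort Prop.
Combined Scheme val_comp_ind from val_ind', comp_ind'.

Section Substitution.
Variable Sg : signature.
Local Notation val := (val Sg).
Local Notation comp := (comp Sg).

Lemma up_ren_comp n m k (r : 'I_m -> 'I_k) (r' : 'I_n -> 'I_m) :
  up_ren r \o up_ren r' = up_ren (r \o r').
Proof.
apply: functional_extensionality => i; rewrite /up_ren /=.
by case: (unliftP ord0 i) => [j|] _; rewrite ?liftK ?unlift_none.
Qed.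

Lemma ren_ren n :
  (forall (V : val n) m k (r : 'I_m -> 'I_k) (r' : 'I_n -> 'I_m),
      ren_val r (ren_val r' V) = ren_val (r \o r') V) /\
  (forall (P : comp n) m k (r : 'I_m -> 'I_k) (r' : 'I_n -> 'I_m),
      ren_comp r (ren_comp r' P) = ren_comp (r \o r') P).
Proof.
move: n; apply: val_comp_ind
  => /= [n i|n B IH|n V IH|n V IHV W IHW|n P IHP P' IHP'|n o Ps IH] m k r r';
  rewrite ?IH ?IHV ?IHW ?IHP ?IHP' ?up_ren_comp //.
by congr Op; apply: functional_extensionality => i; rewrite IH.
Qed.

Lemma up_sub_ren n m k (s : 'I_m -> val k) (r : 'I_n -> 'I_m) :
  up_sub s \o up_ren r = up_sub (s \o r).
Proof.
apply: functional_extensionality => i; rewrite /up_ren /up_sub /=.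
by case: (unliftP ord0 i) => [j|] _; rewrite ?liftK ?unlift_none.
Qed.

Lemma sub_ren n :
  (forall (V : val n) m k (s : 'I_m -> val k) (r : 'I_n -> 'I_m),
      sub_val s (ren_val r V) = sub_val (s \o r) V) /\
  (forall (P : comp n) m k (s : 'I_m -> val k) (r : 'I_n -> 'I_m),
      sub_comp s (ren_comp r P) = sub_comp (s \o r) P).
Proof.
move: n; apply: val_comp_ind
  => /= [n i|n B IH|n V IH|n V IHV W IHW|n P IHP P' IHP'|n o Ps IH] m k s r;
  rewrite ?IH ?IHV ?IHW ?IHP ?IHP' ?up_sub_ren //.
by congr Op; apply: functional_extensionality => i; rewrite IH.
Qed.

Lemma ren_up_sub n m k (r : 'I_m -> 'I_k) (s : 'I_n -> val m) :
  ren_val (up_ren r) \o up_sub s = up_sub (ren_val r \o s).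
Proof.
apply: functional_extensionality => i; rewrite /up_sub /=.
case: (unliftP ord0 i) => [j|] _; last by rewrite /= /up_ren unlift_none.
rewrite !(ren_ren _).1; congr ren_val.
by apply: functional_extensionality => x; rewrite /up_ren /= liftK.
Qed.

Lemma ren_sub n :
  (forall (V : val n) m k (r : 'I_m -> 'I_k) (s : 'I_n -> val m),
      ren_val r (sub_val s V) = sub_val (ren_val r \o s) V) /\
  (forall (P : comp n) m k (r : 'I_m -> 'I_k) (s : 'I_n -> val m),
      ren_comp r (sub_comp s P) = sub_comp (ren_val r \o s) P).
Proof.
move: n; apply: val_comp_ind
  => /= [n i|n B IH|n V IH|n V IHV W IHW|n P IHP P' IHP'|n o Ps IH] m k r s;
  rewrite ?IH ?IHV ?IHW ?IHP ?IHP' ?ren_up_sub //.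
by congr Op; apply: functional_extensionality => i; rewrite IH.
Qed.

Lemma sub_up_sub n m k (s : 'I_m -> val k) (s' : 'I_n -> val m) :
  sub_val (up_sub s) \o up_sub s' = up_sub (sub_val s \o s').
Proof.
apply: functional_extensionality => i; rewrite /up_sub /=.
case: (unliftP ord0 i) => [j|] _; last by rewrite /= unlift_none.
rewrite (sub_ren _).1 (ren_sub _).1; congr sub_val.
by apply: functional_extensionality => x; rewrite /= liftK.
Qed.

Lemma sub_sub n :
  (forall (V : val n) m k (s : 'I_m -> val k) (s' : 'I_n -> val m),
      sub_val s (sub_val s' V) = sub_val (sub_val s \o s') V) /\
  (forall (P : comp n) m k (s : 'I_m -> val k) (s' : 'I_n -> val m),
      sub_comp s (sub_comp s' P) = sub_comp (sub_val s \o s') P).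
Proof.
move: n; apply: val_comp_ind
  => /= [n i|n B IH|n V IH|n V IHV W IHW|n P IHP P' IHP'|n o Ps IH] m k s s';
  rewrite ?IH ?IHV ?IHW ?IHP ?IHP' ?sub_up_sub //.
by congr Op; apply: functional_extensionality => i; rewrite IH.
Qed.

Lemma up_sub_var n : up_sub (@Var Sg n) = @Var Sg n.+1.
Proof.
apply: functional_extensionality => i; rewrite /up_sub.
by case: (unliftP ord0 i) => [j|] ->.
Qed.

Lemma sub_var n :
  (forall V : val n, sub_val Var V = V) /\ (forall P : comp n, sub_comp Var P = P).
Proof.
move: n; apply: val_comp_ind
  => /= [n i|n B IH|n V IH|n V IHV W IHW|n P IHP P' IHP'|n o Ps IH];
  rewrite ?up_sub_var ?IH ?IHV ?IHW ?IHP ?IHP' //.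
by congr Op; apply: functional_extensionality => i; rewrite IH.
Qed.

Lemma sub_closed (Vs : 'I_0 -> val 0) : Vs = Var.
Proof. by apply: functional_extensionality => -[]. Qed.

Lemma sub_val_closed (Vs : 'I_0 -> val 0) V : sub_val Vs V = V.
Proof. by rewrite (sub_closed Vs) (sub_var _).1. Qed.

Lemma sub_comp_closed (Vs : 'I_0 -> val 0) P : sub_comp Vs P = P.
Proof. by rewrite (sub_closed Vs) (sub_var _).2. Qed.

End Substitution.

Section Denotation.
Variables (Sg : signature) (M : cmonad Sg).

Lemma chain_le X (u : nat -> mT M X) m n : chain M u -> m <= n -> le M (u m) (u n).
Proof.
move=> u_chain; elim: n => [|n IH]; first by rewrite leqn0 => /eqP ->; apply: le_refl.
rewrite leq_eqVlt => /orP[/eqP ->|/IH mn]; first exact: le_refl.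
exact: le_trans mn (u_chain n).
Qed.

Lemma lub_shift X (u : nat -> mT M X) : chain M u -> lub M u = lub M (fun k => u k.+1).
Proof.
move=> u_chain; have shift_chain : chain M (fun k => u k.+1) by move=> k; apply: u_chain.
apply: le_antisym; apply: lub_least => // n.
- exact: le_trans (u_chain n) (lub_ub shift_chain n).
- exact: lub_ub.
Qed.

Lemma lub_const X (x : mT M X) : lub M (fun _ => x) = x.
Proof.
have const_chain : chain M (fun _ => x) by move=> n; apply: le_refl.
apply: le_antisym; first by apply: lub_least => // n; apply: le_refl.
exact: (lub_ub const_chain 0).
Qed.

Lemma lub_diag X (a : nat -> nat -> mT M X) :
  (forall k j, le M (a k j) (a k.+1 j)) -> (forall k j, le M (a k j) (a k j.+1)) ->
  lub M (fun j => lub M (fun k => a k j)) = lub M (fun k => a k k).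
Proof.
move=> mono_k mono_j.
have diag_chain : chain M (fun k => a k k).
  by move=> k; apply: le_trans (mono_k k k) (mono_j k.+1 k).
have col_chain j : chain M (fun k => a k j) by move=> k; apply: mono_k.
have row_chain k : chain M (fun j => a k j) by move=> j; apply: mono_j.
have lub_chain : chain M (fun j => lub M (fun k => a k j)).
  move=> j; apply: lub_least => // k.
  exact: le_trans (mono_j k j) (lub_ub (col_chain j.+1) k).
apply: le_antisym; apply: lub_least => // k.
- apply: lub_least => // j; apply: le_trans (lub_ub diag_chain (maxn j k)).
  apply: le_trans (chain_le (col_chain k) (leq_maxl j k)) _.
  exact: chain_le (row_chain _) (leq_maxr j k).
- exact: le_trans (lub_ub (col_chain k) k) (lub_ub lub_chain k).
Qed.

Lemma chain_approx P : chain M (fun k => approx M k P).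
Proof.
move=> k; elim: k P => [|k IH] P; first exact: bot_least.
case: P => [V|[x|B] W|P P'|o Ps] /=; try exact: le_refl.
- exact: IH.
- apply: le_trans (bind_mono_l _ (IH P)) _.
  by apply: bind_mono_r => V; apply: IH.
- by apply: opT_mono => i; apply: IH.
Qed.

Lemma den_unfold P : den M P = lub M (fun k => approx M k.+1 P).
Proof. exact/lub_shift/chain_approx. Qed.

Lemma den_ret V : den M (Ret V) = ret M V.
Proof. by rewrite den_unfold lub_const. Qed.

Lemma den_app B W : den M (App (Lam B) W) = den M (subst1 B W).
Proof. by rewrite den_unfold. Qed.

Lemma den_op o Ps : den M (Op o Ps) = opT M o (fun i => den M (Ps i)).
Proof.
rewrite den_unfold /= (opT_cont (us := fun k i => approx M k (Ps i))) //.
by move=> k i; apply: chain_approx.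
Qed.

Lemma den_seq P P' :
  den M (Seq P P') = bind M (den M P) (fun V => den M (subst1 P' V)).
Proof.
pose a k j := bind M (approx M k P) (fun V => approx M j (subst1 P' V)).
have a_mono_k k j : le M (a k j) (a k.+1 j) by apply/bind_mono_l/chain_approx.
have a_mono_j k j : le M (a k j) (a k j.+1) by apply: bind_mono_r => V; apply: chain_approx.
transitivity (lub M (fun k => a k k)); first exact: den_unfold.
rewrite -(lub_diag a_mono_k a_mono_j) {2}/den.
rewrite (@bind_cont_r _ M _ _ _ (fun j V => approx M j (subst1 P' V))); last first.
  by move=> j V; apply: chain_approx.
congr (lub M); apply: functional_extensionality => j.
by rewrite /den bind_cont_l //; apply: chain_approx.
Qed.

End Denotation.

Definition relcomp X Y Z (R : X -> Y -> Prop) (S : Y -> Z -> Prop) x z :=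
  exists y, R x y /\ S y z.

Section Similarity.
Variables (Sg : signature) (M : cmonad Sg) (G : relator M).
Local Notation val := (val Sg).
Local Notation comp := (comp Sg).

Lemma app_sim_eq : app_sim G eq eq.
Proof. by split=> [P _ <-|V _ <-]; [apply: rel_eq|]. Qed.

Lemma app_sim_comp RT RV RT' RV' :
  app_sim G RT RV -> app_sim G RT' RV' -> app_sim G (relcomp RT RT') (relcomp RV RV').
Proof.
move=> [simT1 simV1] [simT2 simV2]; split.
- by move=> P R [Q [PQ QR]]; apply: rel_comp (simT1 _ _ PQ) (simT2 _ _ QR).
- by move=> V W [U [VU UW]] X; exists (App U X); split; [apply: simV1|apply: simV2].
Qed.

Lemma app_sim_similarity : app_sim G (simT G) (simV G).
Proof.
split=> [P Q [RT [RV [[simRT simRV] PQ]]]|V W [RT [RV [[simRT simRV] VW]]] U].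
- by apply: rel_mono (simRT _ _ PQ) => V W VW; exists RT, RV.
- by exists RT, RV; split; [split|apply: simRV].
Qed.

Lemma simT_refl P : simT G P P.
Proof. by exists eq, eq; split; [apply: app_sim_eq|]. Qed.

Lemma simV_refl V : simV G V V.
Proof. by exists eq, eq; split; [apply: app_sim_eq|]. Qed.

Lemma simT_trans P Q R : simT G P Q -> simT G Q R -> simT G P R.
Proof.
move=> PQ QR; exists (relcomp (simT G) (simT G)), (relcomp (simV G) (simV G)).
by split; [apply: app_sim_comp app_sim_similarity app_sim_similarity|exists Q].
Qed.

Lemma simV_trans U V W : simV G U V -> simV G V W -> simV G U W.
Proof.
move=> UV VW; exists (relcomp (simT G) (simT G)), (relcomp (simV G) (simV G)).
by split; [apply: app_sim_comp app_sim_similarity app_sim_similarity|exists V].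
Qed.

Lemma openT_refl n (P : comp n) : openT G P P.
Proof. by move=> Vs; apply: simT_refl. Qed.

Lemma openV_refl n (V : val n) : openV G V V.
Proof. by move=> Vs; apply: simV_refl. Qed.

Lemma openT_trans n (P Q R : comp n) : openT G P Q -> openT G Q R -> openT G P R.
Proof. by move=> PQ QR Vs; apply: simT_trans (PQ Vs) (QR Vs). Qed.

Lemma openV_trans n (U V W : val n) : openV G U V -> openV G V W -> openV G U W.
Proof. by move=> UV VW Vs; apply: simV_trans (UV Vs) (VW Vs). Qed.

Lemma openT_sub n m (s : 'I_n -> val m) (P Q : comp n) :
  openT G P Q -> openT G (sub_comp s P) (sub_comp s Q).
Proof. by move=> PQ Vs; rewrite !(sub_sub _ _).2; apply: PQ. Qed.

Lemma openV_sub n m (s : 'I_n -> val m) (V W : val n) :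
  openV G V W -> openV G (sub_val s V) (sub_val s W).
Proof. by move=> VW Vs; rewrite !(sub_sub _ _).1; apply: VW. Qed.

Lemma openT_ren n m (r : 'I_n -> 'I_m) (P Q : comp n) :
  openT G P Q -> openT G (ren_comp r P) (ren_comp r Q).
Proof. by move=> PQ Vs; rewrite !(sub_ren _ _).2; apply: PQ. Qed.

Lemma openV_ren n m (r : 'I_n -> 'I_m) (V W : val n) :
  openV G V W -> openV G (ren_val r V) (ren_val r W).
Proof. by move=> VW Vs; rewrite !(sub_ren _ _).1; apply: VW. Qed.

Lemma openT_closedE (P Q : comp 0) : openT G P Q <-> simT G P Q.
Proof. by split=> [/(_ Var)|PQ Vs]; rewrite !sub_comp_closed. Qed.

Lemma openV_closedE (V W : val 0) : openV G V W <-> simV G V W.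
Proof. by split=> [/(_ Var)|VW Vs]; rewrite !sub_val_closed. Qed.

End Similarity.

Scheme howeV_min := Minimality for howeV Sort Prop
  with howeT_min := Minimality for howeT Sort Prop.
Combined Scheme howe_ind from howeV_min, howeT_min.

Section Howe.
Variables (Sg : signature) (M : cmonad Sg) (G : relator M).
Local Notation val := (val Sg).
Local Notation comp := (comp Sg).

Lemma howe_open_trans :
  (forall n (U V : val n), howeV G U V -> forall W, openV G V W -> howeV G U W) /\
  (forall n (P Q : comp n), howeT G P Q -> forall R, openT G Q R -> howeT G P R).
Proof.
apply: howe_ind.
- move=> n x V xV W VW; exact: H1 (openV_trans xV VW).
- move=> n B L V BL _ LV W VW; exact: H2 BL (openV_trans LV VW).
- move=> n V W N VW _ WN R NR; exact: H3 VW (openT_trans WN NR).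
- move=> n V V' W W' N VV' _ WW' _ VWN R NR; exact: H4 VV' WW' (openT_trans VWN NR).
- move=> n P L P' L' N PL _ PL' _ LN R NR; exact: H5 PL PL' (openT_trans LN NR).
- move=> n o Ps Ns N PNs _ NsN R NR; exact: H6 PNs (openT_trans NsN NR).
Qed.

Lemma howe_refl n : (forall V : val n, howeV G V V) /\ (forall P : comp n, howeT G P P).
Proof.
move: n; apply: val_comp_ind.
- move=> n x; exact: H1 (openV_refl _ _).
- move=> n B IH; exact: H2 IH (openV_refl _ _).
- move=> n V IH; exact: H3 IH (openT_refl _ _).
- move=> n V IHV W IHW; exact: H4 IHV IHW (openT_refl _ _).
- move=> n P IHP P' IHP'; exact: H5 IHP IHP' (openT_refl _ _).
- move=> n o Ps IH; exact: H6 IH (openT_refl _ _).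
Qed.

Lemma howe_ren :
  (forall n (V W : val n), howeV G V W ->
     forall m (r : 'I_n -> 'I_m), howeV G (ren_val r V) (ren_val r W)) /\
  (forall n (P Q : comp n), howeT G P Q ->
     forall m (r : 'I_n -> 'I_m), howeT G (ren_comp r P) (ren_comp r Q)).
Proof.
apply: howe_ind => /=.
- move=> n x V xV m r; exact: H1 (openV_ren r xV).
- move=> n B L V _ IH LV m r; exact: H2 (IH _ _) (openV_ren r LV).
- move=> n V W N _ IH WN m r; exact: H3 (IH _ r) (openT_ren r WN).
- move=> n V V' W W' N _ IHV _ IHW VWN m r.
  exact: H4 (IHV _ r) (IHW _ r) (openT_ren r VWN).
- move=> n P L P' L' N _ IHP _ IHP' LN m r.
  exact: H5 (IHP _ r) (IHP' _ _) (openT_ren r LN).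
- move=> n o Ps Ns N _ IH NsN m r; apply: H6 (openT_ren r NsN) => i; exact: IH.
Qed.

Lemma howe_up_sub n m (s s' : 'I_n -> val m) :
  (forall i, howeV G (s i) (s' i)) -> forall i, howeV G (up_sub s i) (up_sub s' i).
Proof.
move=> ss' i; rewrite /up_sub; case: (unlift ord0 i) => [j|].
- exact: howe_ren.1.
- exact: (howe_refl _).1.
Qed.

Lemma howe_sub :
  (forall n (V W : val n), howeV G V W ->
     forall m (s s' : 'I_n -> val m), (forall i, howeV G (s i) (s' i)) ->
     howeV G (sub_val s V) (sub_val s' W)) /\
  (forall n (P Q : comp n), howeT G P Q ->
     forall m (s s' : 'I_n -> val m), (forall i, howeV G (s i) (s' i)) ->
     howeT G (sub_comp s P) (sub_comp s' Q)).
Proof.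
apply: howe_ind => /=.
- move=> n x V xV m s s' ss'; exact: howe_open_trans.1 (ss' x) _ (openV_sub s' xV).
- move=> n B L V _ IH LV m s s' ss'.
  exact: H2 (IH _ _ _ (howe_up_sub ss')) (openV_sub s' LV).
- move=> n V W N _ IH WN m s s' ss'; exact: H3 (IH _ _ _ ss') (openT_sub s' WN).
- move=> n V V' W W' N _ IHV _ IHW VWN m s s' ss'.
  exact: H4 (IHV _ _ _ ss') (IHW _ _ _ ss') (openT_sub s' VWN).
- move=> n P L P' L' N _ IHP _ IHP' LN m s s' ss'.
  exact: H5 (IHP _ _ _ ss') (IHP' _ _ _ (howe_up_sub ss')) (openT_sub s' LN).
- move=> n o Ps Ns N _ IH NsN m s s' ss'.
  by apply: H6 (openT_sub s' NsN) => i; exact: IH _ _ _ ss'.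
Qed.

Lemma howe_subst1 (B L : comp 1) V W :
  howeT G B L -> howeV G V W -> howeT G (subst1 B V) (subst1 L W).
Proof. by move=> BL VW; apply: howe_sub.2 BL _ _ _ (fun=> VW). Qed.

Lemma howeV_inv n (U V : val n) : howeV G U V ->
  if U is Lam B then exists2 L, howeT G B L & openV G (Lam L) V else True.
Proof. by case=> // ? B L ? BL LV; exists L. Qed.

Lemma howeT_inv n (P N : comp n) : howeT G P N ->
  match P with
  | Ret V => exists2 W, howeV G V W & openT G (Ret W) N
  | App V W => exists V' W', [/\ howeV G V V', howeV G W W' & openT G (App V' W') N]
  | Seq P P' => exists L L', [/\ howeT G P L, howeT G P' L' & openT G (Seq L L') N]
  | Op o Ps => exists2 Ns, forall i, howeT G (Ps i) (Ns i) & openT G (Op o Ns) N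
  end.
Proof.
by case=> [? ? W|? ? V' ? W'|? ? L ? L'|? ? ? Ns] *;
  [exists W|exists V', W'|exists L, L'|exists Ns].
Qed.

Local Notation howe0 := (@howeV _ _ G 0).

Lemma rel_howe_openT_trans u (N Q : comp 0) :
  Gam G howe0 u (den M N) -> openT G N Q -> Gam G howe0 u (den M Q).
Proof.
move=> uN /openT_closedE /(app_sim_similarity G).1 NQ.
apply: rel_mono (rel_comp uN NQ) => U W [V [UV /openV_closedE VW]].
exact: howe_open_trans.1 UV _ VW.
Qed.

Hypotheses (G_ind : rel_inductive G) (G_sig : rel_respects_sig G).

Lemma approx_howe_den k (P Q : comp 0) :
  howeT G P Q -> Gam G howe0 (approx M k P) (den M Q).
Proof.
elim: k P Q => [|k IH] P Q; first by move=> _; apply: G_ind.1.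
move=> /howeT_inv; case: P => [V|[[]//|B] W|P P'|o Ps] /=. (* a closed value is never a variable *)
- case=> W VW WQ; apply: rel_howe_openT_trans WQ.
  by rewrite den_ret; apply: rel_ret.
- case=> V' [W' [/howeV_inv[L BL LV'] WW' V'W'Q]].
  apply: (rel_howe_openT_trans (N := App (Lam L) W')).
    by rewrite den_app; apply: IH; apply: howe_subst1.
  apply: openT_trans V'W'Q; apply/openT_closedE.
  by apply: (app_sim_similarity G).2; apply/openV_closedE.
- case=> L [L' [PL PL' LQ]]; apply: rel_howe_openT_trans LQ.
  rewrite den_seq; apply: rel_bind (IH _ _ PL) => V W VW.
  exact: IH _ _ (howe_subst1 PL' VW).
- case=> Ns PsNs NsQ; apply: rel_howe_openT_trans NsQ.
  by rewrite den_op; apply: G_sig => i; apply: IH.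
Qed.

End Howe.

Theorem mainTheorem9 (Sg : signature) (M : cmonad Sg) (G : relator M)
  (Hind : rel_inductive G) (Hresp : rel_respects_sig G) :
  app_sim G (fun P Q => howeT G P Q) (fun V W => howeV G V W).
Proof.
split=> [P Q PQ | V W VW U].
- by apply: Hind.2 (chain_approx M P) _ => k; apply: approx_howe_den.
- exact: H4 VW ((howe_refl G 0).1 U) (openT_refl G _).
Qed.
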